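(* Let $\Gamma$ be a mandarin graph with $N$ edges and let $\mathbf{z}\in\Sigma(\Gamma)$. Define $\mathcal{T}_{\mathbf{z},\mathrm{s}}(\Gamma)=\{\mathbf{x}\in\mathcal{T}_{\mathbf{z}}(\Gamma):(A_j,B_j)=(C_j,D_j)\text{ for all }j\}$ and $\mathcal{T}_{\mathbf{z},\mathrm{as}}(\Gamma)=\{\mathbf{x}\in\mathcal{T}_{\mathbf{z}}(\Gamma):(A_j,B_j)=-(C_j,D_j)\text{ for all }j\}$. Then $\mathcal{T}_{\mathbf{z}}(\Gamma)=\mathcal{T}_{\mathbf{z},\mathrm{s}}(\Gamma)\oplus\mathcal{T}_{\mathbf{z},\mathrm{as}}(\Gamma)$, and $\mathcal{T}_{\mathbf{z},\mathrm{s}}(\Gamma)\ne\{0\}\iff P_{M,\mathrm{s}}(\mathbf{z})=0$, $\mathcal{T}_{\mathbf{z},\mathrm{as}}(\Gamma)\ne\{0\}\iff P_{M,\mathrm{as}}(\mathbf{z})=0$, where $P_{M,\mathrm{s}}(\mathbf{z})=\sum_{j=1}^N(z_j-1)\prod_{i\ne j}(z_i+1)$ and $P_{M,\mathrm{as}}(\mathbf{z})=\sum_{j=1}^N(z_j+1)\prod_{i\ne j}(z_i-1)$.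
   Context: A mandarin graph has exactly two vertices and $N$ edges $e_1,\dots,e_N$ each joining them; each edge is oriented. For $\boldsymbol{\ell}\in\mathbb{R}_+^N$, $(\Gamma,\boldsymbol{\ell})$ has $e_j\cong[0,\ell_j]$ and the Laplacian $-d^2/dt^2$ edgewise with standard vertex conditions (continuity, zero sum of outgoing derivatives at each vertex). For an eigenpair $(k^2,f)$, $k>0$: $f|_{e_j}(t)=A_j\cos(kt)+B_j\sin(kt)=C_j\cos(k(\ell_j-t))+D_j\sin(k(\ell_j-t))$, and $\mathrm{tr}_k(f)\in\mathbb{C}^{4N}$ is the vector of all $(A_j,B_j,C_j,D_j)$; for $k=0$ (constant $c$), $A_j=C_j=c$, $B_j=D_j=0$. Trace space $\mathcal{T}(\Gamma)=\{(\exp(ik\boldsymbol{\ell}),\mathrm{tr}_k(f))\}$ over all $\boldsymbol{\ell}$, eigenvalues $k^2$, and $f$ in the eigenspace (including $0$), where $\exp(ik\boldsymbol{\ell})=(e^{ik\ell_j})_j\in\mathbb{T}^N$; $\Sigma(\Gamma)$ is the projection to $\mathbb{T}^N$ and $\mathcal{T}_{\mathbf{z}}(\Gamma)=\{\mathbf{x}:(\mathbf{z},\mathbf{x})\in\mathcal{T}(\Gamma)\}$. *)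

From mathcomp Require Import all_boot all_order all_algebra.
From mathcomp Require Export complex.
From mathcomp Require Import all_classical all_reals all_analysis.
Import GRing.Theory Num.Theory.
Set Implicit Arguments. Unset Strict Implicit. Unset Printing Implicit Defensive.
Local Open Scope ring_scope.
Local Open Scope complex_scope.

Section Mandarin.
Variable R : realType.
Variable N : nat.

(* The mandarin graph: vertices are [false] and [true]; edge e_j (j : 'I_N)
   is oriented from vertex [orig j] to vertex [~~ orig j]. An orientation is
   therefore a map orig : 'I_N -> bool. A metric is l : 'I_N -> R with
   all l j > 0; e_j is identified with [0, l j]. *)

Definition expi (x : R) : R[i] := cos x +i* sin x.

(* For k > 0, an eigenfunction for k^2 is edgewise
   f_j(t) = A_j cos(kt) + B_j sin(kt) (complex coefficients);
   its value and derivative: *)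
Definition fval (k : R) (A B : 'I_N -> R[i]) (j : 'I_N) (t : R) : R[i] :=
  A j * (cos (k * t))%:C + B j * (sin (k * t))%:C.
Definition fder (k : R) (A B : 'I_N -> R[i]) (j : 'I_N) (t : R) : R[i] :=
  k%:C * (- A j * (sin (k * t))%:C + B j * (cos (k * t))%:C).

(* Value of f at the endpoint of e_j lying at vertex v, and the derivative of
   f at that endpoint taken in the direction pointing into the edge
   ("outgoing derivative"). *)
Definition end_val (orig : 'I_N -> bool) (l : 'I_N -> R) (k : R)
  (A B : 'I_N -> R[i]) (v : bool) (j : 'I_N) : R[i] :=
  if orig j == v then fval k A B j 0 else fval k A B j (l j).
Definition end_der (orig : 'I_N -> bool) (l : 'I_N -> R) (k : R)
  (A B : 'I_N -> R[i]) (v : bool) (j : 'I_N) : R[i] :=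
  if orig j == v then fder k A B j 0 else - fder k A B j (l j).

Definition standard_conds (orig : 'I_N -> bool) (l : 'I_N -> R) (k : R)
  (A B : 'I_N -> R[i]) : Prop :=
  forall v : bool,
    (forall i j : 'I_N, end_val orig l k A B v i = end_val orig l k A B v j) /\
    \sum_(j < N) end_der orig l k A B v j = 0.

Definition is_eigen_pos (orig : 'I_N -> bool) (l : 'I_N -> R) (k : R) : Prop :=
  0 < k /\ exists A B : 'I_N -> R[i],
    standard_conds orig l k A B /\ (exists j, A j != 0 \/ B j != 0).

(* Trace vectors in C^{4N} are stored as N x 4 matrices: row j is
   (A_j, B_j, C_j, D_j). *)
Definition iA : 'I_4 := @Ordinal 4 0 isT.
Definition iB : 'I_4 := @Ordinal 4 1 isT.
Definition iC : 'I_4 := @Ordinal 4 2 isT.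
Definition iD : 'I_4 := @Ordinal 4 3 isT.

Definition is_trace_pos (l : 'I_N -> R) (k : R) (A B : 'I_N -> R[i])
  (x : 'M[R[i]]_(N, 4)) : Prop :=
  forall j : 'I_N, x j iA = A j /\ x j iB = B j /\
    forall t : R, fval k A B j t =
      x j iC * (cos (k * (l j - t)))%:C + x j iD * (sin (k * (l j - t)))%:C.

Definition trace_space (orig : 'I_N -> bool) (z : 'I_N -> R[i])
  (x : 'M[R[i]]_(N, 4)) : Prop :=
  exists l : 'I_N -> R, (forall j, 0 < l j) /\
  exists k : R, 0 <= k /\ (forall j, z j = expi (k * l j)) /\
   ((k = 0 /\ exists c : R[i], forall j,
        x j iA = c /\ x j iB = 0 /\ x j iC = c /\ x j iD = 0)
    \/
    (is_eigen_pos orig l k /\ exists A B : 'I_N -> R[i],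
        standard_conds orig l k A B /\ is_trace_pos l k A B x)).

Definition in_Sigma (orig : 'I_N -> bool) (z : 'I_N -> R[i]) : Prop :=
  exists x, trace_space orig z x.

Definition Tz (orig : 'I_N -> bool) (z : 'I_N -> R[i]) (x : 'M[R[i]]_(N, 4)) :=
  trace_space orig z x.
Definition Tz_s (orig : 'I_N -> bool) (z : 'I_N -> R[i]) (x : 'M[R[i]]_(N, 4)) :=
  Tz orig z x /\ forall j, x j iA = x j iC /\ x j iB = x j iD.
Definition Tz_as (orig : 'I_N -> bool) (z : 'I_N -> R[i]) (x : 'M[R[i]]_(N, 4)) :=
  Tz orig z x /\ forall j, x j iA = - x j iC /\ x j iB = - x j iD.

Definition PMs (z : 'I_N -> R[i]) : R[i] :=
  \sum_(j < N) (z j - 1) * \prod_(i < N | i != j) (z i + 1).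
Definition PMas (z : 'I_N -> R[i]) : R[i] :=
  \sum_(j < N) (z j + 1) * \prod_(i < N | i != j) (z i - 1).

End Mandarin.

(* [T_z] is the solution space of a linear system that depends on [z] alone:
   [(C_j, D_j)] is the image of [(A_j, B_j)] under the reflection
   [[Re z_j, Im z_j], [Im z_j, -Re z_j]], and the vertex conditions are
   continuity and Kirchhoff's law.  Exchanging [(A, B)] with [(C, D)] preserves
   this system and is an involution, which splits [T_z] into its [+1] and [-1]
   eigenspaces.  On the [sigma]-eigenspace ([sigma = +-1]) continuity leaves a
   single vertex value [a], Kirchhoff's law says that the signed slopes [b_j]
   sum to zero, and the reflection condition becomes
   [a (sigma z_j - 1) = i b_j (sigma z_j + 1)].  A nonzero solution [(a, b)]
   exists iff [P_{M,s}(sigma z) = 0]: for [a <> 0] multiply by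
   [prod_j (sigma z_j + 1)], for [a = 0] two of the [sigma z_j] equal [-1].
   Finally [P_{M,s}(-z) = +-P_{M,as}(z)]. *)

From mathcomp Require Import all_boot all_order all_algebra.
From mathcomp Require Import complex.
From mathcomp Require Import all_classical all_reals all_analysis.
From mathcomp Require Import fingroup perm.
From mathcomp.algebra_tactics Require Import ring.
Import Order.TTheory GRing.Theory Num.Theory.
Set Implicit Arguments. Unset Strict Implicit. Unset Printing Implicit Defensive.
Local Open Scope ring_scope.
Local Open Scope complex_scope.

Section ReducedSystem.
Variables (R : realType) (N : nat).

Lemma i_neq0 : 'i != 0 :> R[i].
Proof. by rewrite eq_complex /= oner_eq0 andbF. Qed.

(* With [e1 := a c + b s - a] and [e2 := a s - b c - b], the combinations
   [(1 + c) e1 + s e2] and [s e1 + (1 - c) e2] vanish when [c^2 + s^2 = 1];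
   hence [e1 + i e2 = 0] forces [e1 = e2 = 0]. *)
Lemma reflection_fixed_iff (c s a b : R[i]) : c ^+ 2 + s ^+ 2 = 1 ->
  (a = a * c + b * s /\ b = a * s - b * c) <->
  a * (c + 'i * s - 1) = 'i * b * (c + 'i * s + 1).
Proof.
move=> cs1; set E := a * (c + 'i * s - 1) - 'i * b * (c + 'i * s + 1).
set e1 := a * c + b * s - a; set e2 := a * s - b * c - b.
have EE : E = e1 + 'i * e2 - (1 + 'i ^+ 2) * b * s by rewrite /E /e1 /e2; ring.
have e2E : e2 * 2%:R = ('i * a + b) * (c ^+ 2 + s ^+ 2 - 1) - ('i * (1 + c) + s) * E
    + (1 + 'i ^+ 2) * ((1 + c) * e2 - b * s * ('i * (1 + c) + s)).
  by rewrite /E /e2; ring.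
have e1E : e1 = E - 'i * e2 + (1 + 'i ^+ 2) * b * s by rewrite EE; ring.
rewrite cs1 sqr_i !(subrr, mul0r, mulr0, addr0, subr0, sub0r) in e2E e1E EE.
split=> [[ea eb] | /eqP].
  by apply/eqP; rewrite -subr_eq0 -/E EE /e1 /e2 -ea -eb !subrr mulr0 addr0.
rewrite -subr_eq0 -/E => /eqP E0.
have e2_0 : e2 = 0.
  by move/eqP: e2E; rewrite E0 mulr0 oppr0 mulf_eq0 pnatr_eq0 orbF => /eqP.
have e1_0 : e1 = 0 by rewrite e1E E0 e2_0 mulr0 subr0.
split; apply/eqP; rewrite eq_sym -subr_eq0; apply/eqP; [exact: e1_0 | exact: e2_0].
Qed.

Lemma PMs_opp (w : 'I_N -> R[i]) :
  PMs (fun j => - w j) = - (-1) ^+ N.-1 * PMas w.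
Proof.
rewrite /PMs /PMas mulr_sumr; apply: eq_bigr => j _.
have -> : \prod_(i < N | i != j) (- w i + 1) =
          (-1) ^+ N.-1 * \prod_(i < N | i != j) (w i - 1).
  have := prodrN (predC1 j) (fun i => w i - 1); rewrite cardC1 card_ord => <-.
  by apply: eq_bigr => i _; rewrite opprB addrC.
ring.
Qed.

Lemma PMs_two_poles (w : 'I_N -> R[i]) j1 j2 :
  j1 != j2 -> w j1 + 1 = 0 -> w j2 + 1 = 0 -> PMs w = 0.
Proof.
move=> j12 pole1 pole2; apply: big1 => j _.
have [->|jj1] := eqVneq j j1.
  by rewrite (bigD1 j2) 1?eq_sym //= pole2 mul0r mulr0.
by rewrite (bigD1 j1) 1?eq_sym //= pole1 mul0r mulr0.
Qed.

Lemma PMs_at_pole (w : 'I_N -> R[i]) j1 : w j1 + 1 = 0 ->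
  PMs w = (w j1 - 1) * \prod_(i < N | i != j1) (w i + 1).
Proof.
move=> pole1; rewrite /PMs (bigD1 j1) //= [X in _ + X]big1 ?addr0 // => j jj1.
by rewrite (bigD1 j1) 1?eq_sym //= pole1 mul0r mulr0.
Qed.

Lemma PMs_mul (w : 'I_N -> R[i]) a b :
  (forall j, a * (w j - 1) = 'i * b j * (w j + 1)) ->
  a * PMs w = 'i * (\sum_(j < N) b j) * \prod_(j < N) (w j + 1).
Proof.
move=> ab; rewrite /PMs mulr_sumr mulr_sumr mulr_suml; apply: eq_bigr => j _.
by rewrite mulrA ab -!mulrA [\prod_(i < N) _](bigD1 j).
Qed.

(* [a] is the common vertex value and [b j] the signed slope on edge [j] of a
   trace vector lying in an eigenspace of the end swap. *)
Definition reduced_solvable (w : 'I_N -> R[i]) : Prop :=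
  exists (a : R[i]) (b : 'I_N -> R[i]), (a != 0 \/ exists j, b j != 0) /\
    \sum_(j < N) b j = 0 /\ forall j, a * (w j - 1) = 'i * b j * (w j + 1).

Lemma reduced_solvable_iff (w : 'I_N -> R[i]) : reduced_solvable w <-> PMs w = 0.
Proof.
split=> [[a [b [nz [sum_b ab]]]] | PMs0].
  have [a0|a_neq0] := eqVneq a 0; last first.
    move/eqP: (PMs_mul ab); rewrite sum_b mulr0 mul0r mulf_eq0 (negbTE a_neq0).
    exact/eqP.
  move: nz ab; rewrite a0 eqxx => -[//|[j1 bj1]] ab.
  have pole j : b j != 0 -> w j + 1 = 0.
    move=> bj; apply/eqP; move/esym/eqP: (ab j).
    by rewrite mul0r !mulf_eq0 (negbTE i_neq0) (negbTE bj).
  have /existsP [j2 /andP [j21 bj2]] : [exists j2, (j2 != j1) && (b j2 != 0)].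
    apply: contraLR bj1; rewrite negb_exists negbK => /forallP none.
    move/eqP: sum_b; rewrite (bigD1 j1) //= addr_eq0 big1 ?oppr0 // => j jj1.
    by move: (none j); rewrite jj1 negbK => /eqP.
  by apply: (PMs_two_poles j21); apply: pole.
have [j1 /eqP pole1 | no_pole] := pickP (fun j => w j + 1 == 0); last first.
  have w1_neq0 j : w j + 1 != 0 by rewrite no_pole.
  pose b j := (w j - 1) / ('i * (w j + 1)).
  have ab j : 1 * (w j - 1) = 'i * b j * (w j + 1).
    by rewrite /b; field; rewrite w1_neq0 i_neq0.
  exists 1, b; split; first by left; exact: oner_neq0.
  split=> //; move/esym/eqP: (PMs_mul ab); rewrite PMs0 mulr0 !mulf_eq0.
  rewrite (negbTE i_neq0) /= => /orP [/eqP //|/prodf_eq0 [j _ /eqP w1_eq0]].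
  by move/eqP: (w1_neq0 j).
have [j2 j21 pole2] : exists2 j2, j2 != j1 & w j2 + 1 = 0.
  move/eqP: PMs0; rewrite (PMs_at_pole pole1) mulf_eq0.
  have -> : w j1 - 1 = (w j1 + 1) - 2%:R by ring.
  rewrite pole1 sub0r oppr_eq0 pnatr_eq0 /= => /prodf_eq0 [j2 j21 /eqP pole2].
  by exists j2.
exists 0, (fun j => (j == j1)%:R - (j == j2)%:R); split; [|split].
- by right; exists j1; rewrite eqxx [j1 == j2]eq_sym (negbTE j21) subr0 oner_neq0.
- have sum_delta (j0 : 'I_N) : \sum_(j < N) ((j == j0)%:R : R[i]) = 1.
    by rewrite (bigD1 j0) //= eqxx big1 ?addr0 // => j /negbTE ->.
  by rewrite sumrB !sum_delta subrr.
- move=> j; rewrite mul0r.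
  have [->|_] := eqVneq j j1; first by rewrite pole1 mulr0.
  have [->|_] := eqVneq j j2; first by rewrite pole2 mulr0.
  by rewrite subr0 mulr0 mul0r.
Qed.

End ReducedSystem.

Lemma fval_shift (R : realType) (N : nat) (k l0 : R) (A B : 'I_N -> R[i]) j t :
  fval k A B j t =
    (A j * (cos (k * l0))%:C + B j * (sin (k * l0))%:C) * (cos (k * (l0 - t)))%:C +
    (A j * (sin (k * l0))%:C - B j * (cos (k * l0))%:C) * (sin (k * (l0 - t)))%:C.
Proof.
rewrite /fval (_ : k * t = k * l0 - k * (l0 - t)); last by ring.
by rewrite cosB sinB ?rmorphD ?rmorphB ?rmorphM /=; ring.
Qed.

Lemma ord4P (i : 'I_4) : [\/ i = iA, i = iB, i = iC | i = iD].
Proof.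
case: i => -[|[|[|[|//]]]] i4;
  [constructor 1 | constructor 2 | constructor 3 | constructor 4]; exact: val_inj.
Qed.

(* Exchanging [(A_j, B_j)] and [(C_j, D_j)] shifts the column index by 2
   in [Z/4]. *)
Definition swap_perm : 'S_4 := perm (addrI iC).

Lemma swap_permK : (swap_perm * swap_perm = 1)%g.
Proof.
apply/permP => i; rewrite permM !permE addrA (_ : iC + iC = 0) ?add0r //.
exact: val_inj.
Qed.

Lemma swap_permE : (swap_perm iA = iC) * (swap_perm iB = iD) *
  (swap_perm iC = iA) * (swap_perm iD = iB).
Proof. by rewrite !permE; do !split; apply: val_inj. Qed.

Section TraceEquations.
Variables (R : realType) (N : nat) (orig : 'I_N -> bool) (z : 'I_N -> R[i]).
Implicit Types (x : 'M[R[i]]_(N, 4)) (A B : 'I_N -> R[i]).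

Definition cz j : R[i] := (complex.Re (z j))%:C.
Definition sz j : R[i] := (complex.Im (z j))%:C.

(* Expanding [f_j] around [t = l_j], where [z_j = exp(i k l_j)], exhibits
   [(C_j, D_j)] as the image of [(A_j, B_j)] under the reflection
   [[c, s], [s, -c]]. *)
Definition transfer x : Prop := forall j,
  x j iC = x j iA * cz j + x j iB * sz j /\ x j iD = x j iA * sz j - x j iB * cz j.

(* Value and outgoing derivative (divided by k) of [f] at the end of [e_j]
   lying at vertex [v]. *)
Definition vertex_val x v j : R[i] := if orig j == v then x j iA else x j iC.
Definition vertex_slope x v j : R[i] := if orig j == v then x j iB else x j iD.

Definition trace_eqs x : Prop :=
  [/\ transfer x, forall v i j, vertex_val x v i = vertex_val x v j
    & forall v, \sum_(j < N) vertex_slope x v j = 0].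

Definition trace_mx A B C D : 'M[R[i]]_(N, 4) :=
  \matrix_(j, i) [:: A j; B j; C j; D j]`_i.

Lemma trace_mxE A B C D j :
  (trace_mx A B C D j iA = A j) * (trace_mx A B C D j iB = B j) *
  (trace_mx A B C D j iC = C j) * (trace_mx A B C D j iD = D j).
Proof. by rewrite !mxE. Qed.

Section PositiveEigenvalue.
Variables (l : 'I_N -> R) (k : R).
Hypotheses (k_gt0 : 0 < k) (zE : forall j, z j = expi (k * l j)).

Lemma czE j : cz j = (cos (k * l j))%:C. Proof. by rewrite /cz zE. Qed.
Lemma szE j : sz j = (sin (k * l j))%:C. Proof. by rewrite /sz zE. Qed.

Lemma is_trace_posE A B x : is_trace_pos l k A B x <->
  (forall j, x j iA = A j /\ x j iB = B j) /\ transfer x.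
Proof.
split=> [tr | [AB tr] j]; last first.
  have [xA xB] := AB j; do 2!split=> //; move=> t.
  by rewrite (fval_shift _ (l j)) -czE -szE -xA -xB; have [-> ->] := tr j.
split=> j; have [xA [xB fvalE]] := tr j; first by [].
rewrite czE szE xA xB; split.
  move: (fvalE (l j)); rewrite (fval_shift _ (l j)) subrr mulr0 cos0 sin0.
  by rewrite rmorph0 rmorph1 !mulr1 !mulr0 !addr0 => ->.
have half_pi : k * (l j - (l j - pi / 2 / k)) = pi / 2.
  by field; exact: lt0r_neq0.
move: (fvalE (l j - pi / 2 / k)); rewrite (fval_shift _ (l j)) half_pi.
by rewrite cos_pihalf sin_pihalf rmorph0 rmorph1 !mulr1 !mulr0 !add0r => ->.
Qed.

Lemma standard_condsE x : transfer x ->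
  standard_conds orig l k (fun j => x j iA) (fun j => x j iB) <->
  (forall v i j, vertex_val x v i = vertex_val x v j) /\
  (forall v, \sum_(j < N) vertex_slope x v j = 0).
Proof.
move=> tr.
have valE v j : end_val orig l k (fun j => x j iA) (fun j => x j iB) v j =
                vertex_val x v j.
  rewrite /end_val /vertex_val /fval; case: ifP => _.
    by rewrite mulr0 cos0 sin0 rmorph0 rmorph1 mulr1 mulr0 addr0.
  by rewrite -czE -szE (tr j).1.
have derE v j : end_der orig l k (fun j => x j iA) (fun j => x j iB) v j =
                k%:C * vertex_slope x v j.
  rewrite /end_der /vertex_slope /fder; case: ifP => _.
    by rewrite mulr0 cos0 sin0 rmorph0 rmorph1; ring.
  by rewrite -czE -szE (tr j).2; ring.
have kC_neq0 : k%:C != 0 :> R[i] by rewrite fmorph_eq0 lt0r_neq0.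
split=> [std | [cont kir] v].
  split=> v; first by move=> i j; rewrite -!valE; exact: (std v).1.
  move: (std v).2; under eq_bigr do rewrite derE.
  by rewrite -mulr_sumr => /eqP; rewrite mulf_eq0 (negbTE kC_neq0) => /eqP.
split=> [i j|]; first by rewrite !valE.
by under eq_bigr do rewrite derE; rewrite -mulr_sumr kir mulr0.
Qed.

End PositiveEigenvalue.

Lemma Tz_trace_eqs x : Tz orig z x -> trace_eqs x.
Proof.
case=> l [_ [k [_ [zE [[k0 [c cst]] | [[k_gt0 _] [A [B [std tr]]]]]]]]].
  have csE j : cz j = 1 /\ sz j = 0.
    by rewrite /cz /sz zE k0 mul0r /expi /= cos0 sin0 rmorph1 rmorph0.
  split=> [j | v i j | v].
  - by have [-> [-> [-> ->]]] := cst j; have [-> ->] := csE j; split; ring.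
  - rewrite /vertex_val; have [-> [_ [-> _]]] := cst i.
    by have [-> [_ [-> _]]] := cst j; rewrite !if_same.
  - apply: big1 => j _; rewrite /vertex_slope.
    by have [_ [-> [_ ->]]] := cst j; rewrite if_same.
have [AB trx] := (is_trace_posE k_gt0 zE A B x).1 tr.
have eA : A = (fun j => x j iA) by apply: funext => j; rewrite (AB j).1.
have eB : B = (fun j => x j iB) by apply: funext => j; rewrite (AB j).2.
subst A B; by have [cont kir] := (standard_condsE k_gt0 zE trx).1 std.
Qed.

(* A point of [Sigma] coming from [k = 0] has [z = 1], which is also realised
   by the constant eigenfunction for [k = 2 pi] on unit lengths. *)
Lemma in_Sigma_pos : (0 < N)%N -> in_Sigma orig z -> exists l k,
  [/\ 0 < k, forall j, 0 < l j, forall j, z j = expi (k * l j)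
    & is_eigen_pos orig l k].
Proof.
move=> N_gt0 [x [l [l_gt0 [k [_ [zE [[k0 _] | [eig _]]]]]]]]; last first.
  by exists l, k; split=> //; case: eig.
pose one := trace_mx (fun=> 1) (fun=> 0) (fun=> 1) (fun=> 0).
have [tr cont kir] : trace_eqs one.
  apply: Tz_trace_eqs; exists l; split=> //; exists 0; split=> //.
  split; first by rewrite -k0.
  by left; split=> //; exists 1 => j; rewrite !trace_mxE.
have two_pi_gt0 : 0 < pi *+ 2 :> R by rewrite pmulrn_lgt0 // pi_gt0.
have zE' j : z j = expi (pi *+ 2 * 1).
  by rewrite zE k0 mul0r mulr1 /expi cos0 sin0 cos2pi sin2pi.
exists (fun=> 1), (pi *+ 2); split=> //; split=> //.
exists (fun j => one j iA), (fun j => one j iB); split.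
  exact/(standard_condsE two_pi_gt0 zE' tr).
by exists (Ordinal N_gt0); left; rewrite trace_mxE oner_eq0.
Qed.

Lemma trace_eqs_Tz x : (0 < N)%N -> in_Sigma orig z -> trace_eqs x -> Tz orig z x.
Proof.
move=> N_gt0 /(in_Sigma_pos N_gt0) [l [k [k_gt0 l_gt0 zE eig]]] [tr cont kir].
exists l; split=> //; exists k; split; first exact: ltW.
split=> //; right; split=> //; exists (fun j => x j iA), (fun j => x j iB).
split; first exact/(standard_condsE k_gt0 zE tr).
exact/(is_trace_posE k_gt0 zE).
Qed.

Lemma TzE x : (0 < N)%N -> in_Sigma orig z -> Tz orig z x <-> trace_eqs x.
Proof. by move=> N_gt0 zS; split; [exact: Tz_trace_eqs | exact: trace_eqs_Tz]. Qed.

Lemma cz_sz_norm : in_Sigma orig z -> forall j, cz j ^+ 2 + sz j ^+ 2 = 1.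
Proof.
case=> x [l [_ [k [_ [zE _]]]]] j.
by rewrite (czE zE) (szE zE) -!rmorphXn -rmorphD cos2Dsin2.
Qed.

Lemma trace_eqs0 : trace_eqs 0.
Proof.
split=> [j | v i j | v].
- by rewrite !mxE !mul0r addr0 subrr.
- by rewrite /vertex_val !mxE !if_same.
- by apply: big1 => j _; rewrite /vertex_slope !mxE if_same.
Qed.

Lemma trace_eqs_lincomb (a : R[i]) x y :
  trace_eqs x -> trace_eqs y -> trace_eqs (a *: x + y).
Proof.
move=> [trx contx kirx] [try conty kiry].
have valE v j :
    vertex_val (a *: x + y) v j = a * vertex_val x v j + vertex_val y v j.
  by rewrite /vertex_val !mxE; case: ifP.
have slopeE v j :
    vertex_slope (a *: x + y) v j = a * vertex_slope x v j + vertex_slope y v j.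
  by rewrite /vertex_slope !mxE; case: ifP.
split=> [j | v i j | v].
- by rewrite !mxE; have [-> ->] := trx j; have [-> ->] := try j; split; ring.
- by rewrite !valE (contx v i j) (conty v i j).
- under eq_bigr do rewrite slopeE.
  by rewrite big_split -mulr_sumr /= kirx kiry mulr0 addr0.
Qed.

Definition swap_ends x : 'M[R[i]]_(N, 4) := col_perm swap_perm x.

Lemma swap_endsE x j :
  (swap_ends x j iA = x j iC) * (swap_ends x j iB = x j iD) *
  (swap_ends x j iC = x j iA) * (swap_ends x j iD = x j iB).
Proof. by rewrite !mxE !swap_permE. Qed.

Lemma vertex_val_swap x v j : vertex_val (swap_ends x) v j = vertex_val x (~~ v) j.
Proof. by rewrite /vertex_val !swap_endsE; case: (orig j); case: v. Qed.

Lemma vertex_slope_swap x v j :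
  vertex_slope (swap_ends x) v j = vertex_slope x (~~ v) j.
Proof. by rewrite /vertex_slope !swap_endsE; case: (orig j); case: v. Qed.

(* The reflection defining [transfer] is an involution on the unit circle. *)
Lemma trace_eqs_swap x : (forall j, cz j ^+ 2 + sz j ^+ 2 = 1) ->
  trace_eqs x -> trace_eqs (swap_ends x).
Proof.
move=> cs1 [tr cont kir]; split=> [j | v i j | v].
- rewrite !swap_endsE; have [-> ->] := tr j; split.
    by rewrite -[LHS]mulr1 -(cs1 j); ring.
  by rewrite -[LHS]mulr1 -(cs1 j); ring.
- by rewrite !vertex_val_swap.
- by under eq_bigr do rewrite vertex_slope_swap.
Qed.

Definition eigen_part (sigma : R[i]) x := 2^-1 *: (x + sigma *: swap_ends x).

Lemma swap_ends_eigen_part sigma x : sigma * sigma = 1 ->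
  swap_ends (eigen_part sigma x) = sigma *: eigen_part sigma x.
Proof.
move=> sigma2; apply/matrixP => j i; rewrite !mxE -permM swap_permK perm1.
by rewrite -[x j (swap_perm i) in LHS]mul1r -sigma2; ring.
Qed.

Lemma eigen_parts_sum x : x = eigen_part 1 x + eigen_part (-1) x.
Proof.
rewrite /eigen_part scale1r scaleN1r -scalerDr addrACA subrr addr0 -mulr2n.
by rewrite -[x *+ 2]scaler_nat scalerA mulVf ?scale1r // pnatr_eq0.
Qed.

Lemma trace_eqs_eigen_part sigma x : (forall j, cz j ^+ 2 + sz j ^+ 2 = 1) ->
  trace_eqs x -> trace_eqs (eigen_part sigma x).
Proof.
move=> cs1 eqs; rewrite /eigen_part -[_ *: _]addr0.
apply: trace_eqs_lincomb; last exact: trace_eqs0.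
by rewrite addrC; apply: trace_eqs_lincomb => //; exact: trace_eqs_swap.
Qed.

End TraceEquations.

Section SwapEigenspace.
Variables (R : realType) (N : nat) (orig : 'I_N -> bool) (z : 'I_N -> R[i]).
Variables (sigma : R[i]) (sigma2 : sigma * sigma = 1).
Implicit Types (x : 'M[R[i]]_(N, 4)).

Lemma sigma_mulK y : sigma * (sigma * y) = y.
Proof. by rewrite mulrA sigma2 mul1r. Qed.

Lemma swap_ends_eigenE x : swap_ends x = sigma *: x <->
  forall j, x j iA = sigma * x j iC /\ x j iB = sigma * x j iD.
Proof.
split=> [eig j | eig].
  have := congr1 (fun m : 'M[R[i]]_(N, 4) => (m j iC, m j iD)) eig.
  by rewrite /= !swap_endsE !mxE => -[-> ->].
apply/matrixP => j i; have [eA eB] := eig j; rewrite !mxE.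
by case: (ord4P i) => ->; rewrite swap_permE ?eA ?eB ?sigma_mulK.
Qed.

(* In the [sigma]-eigenspace the coefficients at the end of [e_j] lying at
   vertex [true] are [sign_at j] times [(A_j, B_j)]. *)
Definition sign_at j : R[i] := if orig j then 1 else sigma.

Lemma sign_atK j y : sign_at j * (sign_at j * y) = y.
Proof. by rewrite /sign_at; case: (orig j); rewrite ?mul1r ?sigma_mulK. Qed.

Lemma sign_at_eq0 j y : (sign_at j * y == 0) = (y == 0).
Proof.
apply/eqP/eqP => [y0|->]; last by rewrite mulr0.
by rewrite -[y](sign_atK j) y0 mulr0.
Qed.

Lemma vertex_val_eigen x v j : swap_ends x = sigma *: x ->
  vertex_val orig x v j = (if v then 1 else sigma) * (sign_at j * x j iA).
Proof.
move=> /swap_ends_eigenE eig; rewrite /vertex_val /sign_at; have [-> _] := eig j.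
by case: (orig j); case: v; rewrite /= ?mul1r ?sigma_mulK.
Qed.

Lemma vertex_slope_eigen x v j : swap_ends x = sigma *: x ->
  vertex_slope orig x v j = (if v then 1 else sigma) * (sign_at j * x j iB).
Proof.
move=> /swap_ends_eigenE eig; rewrite /vertex_slope /sign_at; have [_ ->] := eig j.
by case: (orig j); case: v; rewrite /= ?mul1r ?sigma_mulK.
Qed.

Hypothesis cs1 : forall j, cz z j ^+ 2 + sz z j ^+ 2 = 1.

Lemma transfer_eigen x : swap_ends x = sigma *: x ->
  transfer z x <->
  forall j, x j iA * (sigma * z j - 1) = 'i * x j iB * (sigma * z j + 1).
Proof.
move=> /swap_ends_eigenE eig.
have sigma_zE j : sigma * z j = sigma * cz z j + 'i * (sigma * sz z j).
  by rewrite {1}[z j]complexE mulrDr mulrCA.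
have sigma_cs1 j : (sigma * cz z j) ^+ 2 + (sigma * sz z j) ^+ 2 = 1.
  by rewrite !exprMn -mulrDr cs1 mulr1 expr2 sigma2.
split=> [tr j | refl j].
  have [eA eB] := eig j; have [eC eD] := tr j.
  rewrite sigma_zE; apply/(reflection_fixed_iff _ _ (sigma_cs1 j)).
  by rewrite {1}eA {2}eB eC eD; split; ring.
move: (refl j); rewrite sigma_zE.
move=> /(reflection_fixed_iff _ _ (sigma_cs1 j)) [fA fB].
have [eA eB] := eig j.
have -> : x j iC = sigma * x j iA by rewrite eA sigma_mulK.
have -> : x j iD = sigma * x j iB by rewrite eB sigma_mulK.
split; [rewrite {1}fA | rewrite {1}fB]; rewrite -[RHS]mul1r -sigma2; ring.
Qed.

Hypothesis N_gt0 : (0 < N)%N.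

Lemma reduced_solvable_of_eigen x :
  trace_eqs orig z x -> swap_ends x = sigma *: x -> x <> 0 ->
  reduced_solvable (fun j => sigma * z j).
Proof.
move=> [tr cont kir] eig x_neq0; pose j0 := Ordinal N_gt0.
have signA j : sign_at j * x j iA = sign_at j0 * x j0 iA.
  by move: (cont true j j0); rewrite !(vertex_val_eigen _ _ eig) !mul1r.
have refl := (transfer_eigen eig).1 tr.
exists (sign_at j0 * x j0 iA), (fun j => sign_at j * x j iB); split; [|split].
- have [a0|] := eqVneq (sign_at j0 * x j0 iA) 0; last by left.
  case: (pickP (fun j => sign_at j * x j iB != 0)) => [j bj | b0].
    by right; exists j.
  case: x_neq0; apply/matrixP => j i; rewrite mxE.
  have /eqP xA0 : x j iA == 0 by rewrite -(sign_at_eq0 j) signA a0.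
  have /eqP xB0 : x j iB == 0 by rewrite -(sign_at_eq0 j); apply/negbFE.
  have [eA eB] := (swap_ends_eigenE x).1 eig j.
  have xC0 : x j iC = 0 by rewrite -[x j iC]sigma_mulK -eA xA0 mulr0.
  have xD0 : x j iD = 0 by rewrite -[x j iD]sigma_mulK -eB xB0 mulr0.
  by case: (ord4P i) => ->.
- by move: (kir true); under eq_bigr do rewrite (vertex_slope_eigen _ _ eig) mul1r.
- by move=> j /=; rewrite -(signA j) -!mulrA refl; ring.
Qed.

Lemma eigen_of_reduced_solvable : reduced_solvable (fun j => sigma * z j) ->
  exists x, [/\ trace_eqs orig z x, swap_ends x = sigma *: x & x <> 0].
Proof.
move=> [a [b [nz [sum_b ab]]]]; pose j0 := Ordinal N_gt0.
pose x := trace_mx (fun j => sign_at j * a) (fun j => sign_at j * b j)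
  (fun j => sigma * (sign_at j * a)) (fun j => sigma * (sign_at j * b j)).
have eig : swap_ends x = sigma *: x.
  by apply/swap_ends_eigenE => j; rewrite !trace_mxE !sigma_mulK.
exists x; split=> //; first split.
- apply/(transfer_eigen eig) => j; rewrite !trace_mxE.
  by have /= abj := ab j; rewrite -!mulrA abj; ring.
- by move=> v i j; rewrite !(vertex_val_eigen _ _ eig) !trace_mxE !sign_atK.
- move=> v; under eq_bigr do rewrite (vertex_slope_eigen _ _ eig) trace_mxE sign_atK.
  by rewrite -mulr_sumr sum_b mulr0.
- move=> x0; have entry0 j i : x j i = 0 by rewrite x0 mxE.
  case: nz => [|[j]]; apply/negP; rewrite negbK.
    by rewrite -(sign_at_eq0 j0); move: (entry0 j0 iA); rewrite trace_mxE => ->.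
  by rewrite -(sign_at_eq0 j); move: (entry0 j iB); rewrite trace_mxE => ->.
Qed.

End SwapEigenspace.

Section Decomposition.
Variables (R : realType) (N : nat) (orig : 'I_N -> bool) (z : 'I_N -> R[i]).
Hypotheses (N_gt0 : (0 < N)%N) (zS : in_Sigma orig z).
Implicit Types (x : 'M[R[i]]_(N, 4)).

Let cs1 := cz_sz_norm zS.

Lemma Tz_sE x : Tz_s orig z x <-> Tz orig z x /\ swap_ends x = 1 *: x.
Proof.
have eigE := swap_ends_eigenE (mulr1 (1 : R[i])) x.
split=> -[Tx eig]; split=> //; first by apply/eigE => j; rewrite !mul1r.
by move=> j; have := eigE.1 eig j; rewrite !mul1r.
Qed.

Let mulN1N1 : -1 * -1 = 1 :> R[i].
Proof. by rewrite mulrNN mulr1. Qed.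

Lemma Tz_asE x : Tz_as orig z x <-> Tz orig z x /\ swap_ends x = -1 *: x.
Proof.
have eigE := swap_ends_eigenE mulN1N1 x.
split=> -[Tx eig]; split=> //; first by apply/eigE => j; rewrite !mulN1r.
by move=> j; have := eigE.1 eig j; rewrite !mulN1r.
Qed.

Lemma Tz_sym_asym_decomp x : Tz orig z x <->
  exists xs xa, Tz_s orig z xs /\ Tz_as orig z xa /\ x = xs + xa.
Proof.
split=> [Tx | [xs [xa [[Ts _] [[Ta _] ->]]]]]; last first.
  apply/TzE => //; rewrite -[xs]scale1r.
  by apply: trace_eqs_lincomb; apply/TzE.
have part_Tz sigma : Tz orig z (eigen_part sigma x).
  by apply/TzE => //; apply: trace_eqs_eigen_part => //; apply/TzE.
exists (eigen_part 1 x), (eigen_part (-1) x); split; [|split].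
- by apply/Tz_sE; split; [exact: part_Tz | exact: swap_ends_eigen_part (mulr1 1)].
- by apply/Tz_asE; split; [exact: part_Tz | exact: swap_ends_eigen_part mulN1N1].
- exact: eigen_parts_sum.
Qed.

Lemma Tz_sym_asym_trivial x : Tz_s orig z x -> Tz_as orig z x -> x = 0.
Proof.
move=> /Tz_sE [_ sym] /Tz_asE [_ asym].
have /eqP : (1 - -1) *: x = 0 by rewrite scalerBl -sym -asym subrr.
by rewrite scaler_eq0 opprK -mulr2n pnatr_eq0 => /eqP.
Qed.

Lemma Tz_eigen_nonzero_iff sigma : sigma * sigma = 1 ->
  (exists x, [/\ Tz orig z x, swap_ends x = sigma *: x & x <> 0]) <->
  PMs (fun j => sigma * z j) = 0.
Proof.
move=> sigma2; apply: (iff_trans _ (reduced_solvable_iff _)).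
split=> [[x [/(TzE _ N_gt0 zS) eqs eig x_neq0]] | ].
  exact: (reduced_solvable_of_eigen sigma2 cs1 N_gt0 eqs eig x_neq0).
move/(eigen_of_reduced_solvable orig sigma2 cs1 N_gt0).
by move=> [x [eqs eig x_neq0]]; exists x; split=> //; apply/TzE.
Qed.

Lemma Tz_s_nonzero_iff : (exists x, Tz_s orig z x /\ x <> 0) <-> PMs z = 0.
Proof.
apply: (@iff_trans _ (PMs (fun j => 1 * z j) = 0)).
  apply: (iff_trans _ (Tz_eigen_nonzero_iff (mulr1 1))).
  split=> [[x [/Tz_sE [Tx eig] x_neq0]] | [x [Tx eig x_neq0]]]; exists x.
    by split.
  by split=> //; apply/Tz_sE.
by rewrite (_ : (fun j => 1 * z j) = z) //; apply: funext => j; rewrite mul1r.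
Qed.

Lemma Tz_as_nonzero_iff : (exists x, Tz_as orig z x /\ x <> 0) <-> PMas z = 0.
Proof.
apply: (@iff_trans _ (PMs (fun j => -1 * z j) = 0)).
  apply: (iff_trans _ (Tz_eigen_nonzero_iff mulN1N1)).
  split=> [[x [/Tz_asE [Tx eig] x_neq0]] | [x [Tx eig x_neq0]]]; exists x.
    by split.
  by split=> //; apply/Tz_asE.
rewrite (_ : (fun j => -1 * z j) = fun j => - z j); last first.
  by apply: funext => j; rewrite mulN1r.
rewrite PMs_opp; split=> [/eqP | ->]; last by rewrite mulr0.
by rewrite mulf_eq0 oppr_eq0 signr_eq0 => /eqP.
Qed.

End Decomposition.

Unset Implicit Arguments. Set Strict Implicit.

Theorem mainTheorem12 (R : realType) (N : nat) (orig : 'I_N -> bool)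
  (z : 'I_N -> R[i]) :
  (0 < N)%N -> in_Sigma orig z ->
  ((forall x : 'M[R[i]]_(N, 4),
      Tz orig z x <->
      exists xs xa, Tz_s orig z xs /\ Tz_as orig z xa /\ x = xs + xa) /\
   (forall x : 'M[R[i]]_(N, 4), Tz_s orig z x -> Tz_as orig z x -> x = 0)) /\
  ((exists x, Tz_s orig z x /\ x <> 0) <-> PMs z = 0) /\
  ((exists x, Tz_as orig z x /\ x <> 0) <-> PMas z = 0).
Proof.
move=> N_gt0 zS; split; first split.
- exact: Tz_sym_asym_decomp.
- exact: Tz_sym_asym_trivial.
split.
- exact: Tz_s_nonzero_iff.
- exact: Tz_as_nonzero_iff.
Qed.
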